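(* If $a \geq 2$, then $I_{a,a} \geq \dfrac{r(r+1)}{2}$, where $r = P_a(2a-1)$.
   Context: $K_{a,a}$ is the complete bipartite graph with both partite sets of size $a$. $I_{a,a}$ denotes the number of isomorphism classes (as unlabeled graphs) of spanning trees of $K_{a,a}$. $P_k(m)$ denotes the number of integer partitions of $m$ into exactly $k$ positive parts. *)

From mathcomp Require Import all_boot fingroup perm.
Set Implicit Arguments. Unset Strict Implicit. Unset Printing Implicit Defensive.

(* Vertices of K_{a,a}: left part 'I_a (inl) and right part 'I_a (inr). *)
Definition Kvert (a : nat) : finType := ('I_a + 'I_a)%type.

(* A subgraph of K_{a,a} on all vertices is given by its edge set:
   (i, j) \in E means the edge between left vertex i and right vertex j. *)
Definition Kedges (a : nat) := {set 'I_a * 'I_a}.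

Definition Kadj (a : nat) (E : Kedges a) : rel (Kvert a) :=
  fun u v => match u, v with
             | inl i, inr j => (i, j) \in E
             | inr j, inl i => (i, j) \in E
             | _, _ => false
             end.

Definition Kconnected (a : nat) (E : Kedges a) : bool :=
  [forall u : Kvert a, forall v : Kvert a, connect (Kadj E) u v].

(* E contains a cycle: k >= 3 distinct vertices v_0, ..., v_{k-1} with v_i ~ v_{i+1}
   and v_{k-1} ~ v_0.  (k is bounded by #|V| automatically since the vertices are
   distinct.) *)
Definition Khas_cycle (a : nat) (E : Kedges a) : bool :=
  [exists k : 'I_(#|Kvert a|).+1,
     exists t : k.-tuple (Kvert a), [&& 2 < k, uniq t & path.cycle (Kadj E) t]].

Definition Kspanning_tree (a : nat) (E : Kedges a) : bool :=
  Kconnected E && ~~ Khas_cycle E.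

(* Isomorphism of the graphs (Kvert a, E1) and (Kvert a, E2) as unlabeled graphs:
   a bijection of the vertex set preserving adjacency (not necessarily the sides). *)
Definition Kiso (a : nat) (E1 E2 : Kedges a) : bool :=
  [exists p : {perm Kvert a},
     forall u : Kvert a, forall v : Kvert a, Kadj E1 u v == Kadj E2 (p u) (p v)].

Definition Iaa (a : nat) : nat :=
  #| [set [set E' in [set E'' : Kedges a | Kspanning_tree E''] | Kiso E E']
     | E in [set E'' : Kedges a | Kspanning_tree E''] ] |.

(* P_k(m): number of partitions of m into exactly k positive parts, counted as
   nondecreasing k-tuples of positive integers (each <= m) with sum m. *)
Definition Ppart (k m : nat) : nat :=
  #| [set t : k.-tuple 'I_m.+1 |
       let s := [seq val x | x <- t] in
       [&& sorted leq s, all (fun x => 0 < x) s & sumn s == m] ] |.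

From mathcomp Require Import all_boot fingroup perm.
Set Implicit Arguments. Unset Strict Implicit. Unset Printing Implicit Defensive.

(* A spanning tree of K_{a,a} has 2a - 1 edges, so the degrees on either side form a
   partition of 2a - 1 into a positive parts.  Conversely, every pair (l, m) of such
   partitions is the pair of side degree sequences of some spanning tree: hang every right
   vertex j below a left vertex of index <= j and every left vertex i > 0 below a right
   vertex of index < i, with the parts of l and m minus one as the numbers of children.
   A connected bipartite graph has a unique bipartition, so isomorphic trees have the same
   unordered pair {l, m}; the r (r + 1) / 2 unordered pairs thus give pairwise
   non-isomorphic spanning trees. *)

Section ParentRelation.
Variables (T : finType) (e : rel T) (rk : T -> nat) (par : T -> T).
Hypothesis e_sym : symmetric e.

Lemma connect_parent (root : T) :
  (forall u, u != root -> e u (par u) && (rk (par u) < rk u)) ->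
  forall u v, connect e u v.
Proof.
move=> par_down.
have to_root k u : rk u < k -> connect e u root.
  elim: k u => [|k IHk] u // lt_u_k.
  have [-> | u_root] := eqVneq u root; first exact: connect0.
  case/andP: (par_down u u_root) => e_u_par lt_par_u.
  apply: connect_trans (connect1 e_u_par) (IHk _ _).
  exact: leq_trans lt_par_u lt_u_k.
move=> u v; apply: connect_trans (to_root _ u (ltnSn _)) _.
by rewrite (sym_connect_sym e_sym) (to_root _ v (ltnSn _)).
Qed.

(* In a cycle, a vertex of maximal rank has two distinct lower neighbours,
   both of which would have to be its parent. *)
Lemma parent_cycle_free :
  (forall u v, e u v -> rk u != rk v) ->
  (forall u v, e u v -> rk v < rk u -> v = par u) ->
  forall s : seq T, 2 < size s -> uniq s -> ~~ path.cycle e s.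
Proof.
move=> e_rk e_par [//|x0 s0] size_s uniq_s; apply/negP => cycle_s.
set s := x0 :: s0 in size_s uniq_s cycle_s.
have [u s_u u_max] := @arg_maxnP T x0 (mem s) rk (mem_head x0 s0).
have := rot_index s_u; set i := index u s => rot_s.
have : path.cycle e (rot i s) by rewrite rot_cycle.
have : uniq (rot i s) by rewrite rot_uniq.
have : 2 < size (rot i s) by rewrite size_rot.
have rot_max v : v \in rot i s -> rk v <= rk u by rewrite mem_rot => /u_max.
move: rot_max; rewrite rot_s.
case: (drop i.+1 s ++ take i s) => [|w [|y l]] //= rot_max _.
case/and4P=> _ /negP w_new _ _ /and3P [e_uw _]; rewrite rcons_path => /andP [_ e_zu].
have lt_w : rk w < rk u.
  by rewrite ltn_neqAle eq_sym e_rk ?rot_max ?inE ?eqxx ?orbT.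
have z_in : last y l \in y :: l := mem_last y l.
have lt_z : rk (last y l) < rk u.
  by rewrite ltn_neqAle e_rk ?rot_max // !inE -in_cons z_in !orbT.
rewrite e_sym in e_zu.
by apply: w_new; rewrite (e_par _ _ e_uw lt_w) -(e_par _ _ e_zu lt_z).
Qed.

End ParentRelation.

Lemma perm_map_enum_inj (T : finType) (R : eqType) (g1 g2 : T -> R) (h : T -> T) :
  injective h -> (forall i, g1 i = g2 (h i)) ->
  perm_eq [seq g1 i | i <- enum T] [seq g2 i | i <- enum T].
Proof.
move=> inj_h g12; rewrite (eq_map g12) (map_comp g2 h); apply: perm_map.
apply: uniq_perm; rewrite ?(map_inj_uniq inj_h) ?enum_uniq // => i.
by rewrite mem_enum -[map h _]/(codom h) (inj_card_onto inj_h).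
Qed.

Section CompleteBipartite.
Variable a : nat.
Implicit Types (E : Kedges a) (u v : Kvert a).

Definition Kdeg E u := #|[set v | Kadj E u v]|.
Definition Kldegs E := [seq Kdeg E (inl i) | i <- enum 'I_a].
Definition Krdegs E := [seq Kdeg E (inr j) | j <- enum 'I_a].

Definition is_left u := if u is inl _ then true else false.
Definition Kindex u := match u with inl i | inr i => i end.

Lemma Kadj_sym E : symmetric (Kadj E).
Proof. by case=> x; case=> y. Qed.

Lemma Kadj_is_left E u v : Kadj E u v -> is_left u = ~~ is_left v.
Proof. by case: u; case: v. Qed.

Lemma Kiso_refl E : Kiso E E.
Proof. by apply/existsP; exists 1%g; apply/forallP => u; apply/forallP => v; rewrite !perm1. Qed.

Lemma Kdeg_inl E i : Kdeg E (inl i) = #|[set j | (i, j) \in E]|.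
Proof.
rewrite /Kdeg -(card_imset _ (@inr_inj 'I_a 'I_a)); apply: eq_card => -[v|v].
  by rewrite !inE; apply/esym/imsetP => -[].
by rewrite (mem_imset _ _ (@inr_inj _ _)) !inE.
Qed.

Lemma Kdeg_inr E j : Kdeg E (inr j) = #|[set i | (i, j) \in E]|.
Proof.
rewrite /Kdeg -(card_imset _ (@inl_inj 'I_a 'I_a)); apply: eq_card => -[v|v].
  by rewrite (mem_imset _ _ (@inl_inj _ _)) !inE.
by rewrite !inE; apply/esym/imsetP => -[].
Qed.

Lemma Kdeg_perm E1 E2 (p : {perm Kvert a}) :
  (forall u v, Kadj E1 u v = Kadj E2 (p u) (p v)) ->
  forall u, Kdeg E1 u = Kdeg E2 (p u).
Proof.
move=> p_adj u; rewrite /Kdeg -(card_imset _ (@perm_inj _ p)).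
apply: eq_card => w; rewrite inE; apply/imsetP/idP => [[v + ->]|adj_w].
  by rewrite inE p_adj.
by exists (p^-1 w)%g; rewrite ?inE ?p_adj permKV.
Qed.

Lemma Kdegs_perm E1 E2 (p : {perm Kvert a}) (F G : 'I_a -> Kvert a) :
  (forall u v, Kadj E1 u v = Kadj E2 (p u) (p v)) -> injective F ->
  (forall i, p (F i) = G (Kindex (p (F i)))) ->
  perm_eq [seq Kdeg E1 (F i) | i <- enum 'I_a] [seq Kdeg E2 (G i) | i <- enum 'I_a].
Proof.
move=> p_adj inj_F pFG; apply: (perm_map_enum_inj (h := Kindex \o p \o F)) => [i j /= eq_ij|i].
  by apply/inj_F/(@perm_inj _ p); rewrite pFG eq_ij -pFG.
by rewrite (Kdeg_perm p_adj) {1}pFG.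
Qed.

End CompleteBipartite.

(* A connected bipartite graph has a unique bipartition, so an isomorphism
   either keeps or swaps the two sides. *)
Lemma Kiso_degs n (E1 E2 : Kedges n.+1) : Kconnected E1 -> Kiso E1 E2 ->
  (perm_eq (Kldegs E1) (Kldegs E2) /\ perm_eq (Krdegs E1) (Krdegs E2)) \/
  (perm_eq (Kldegs E1) (Krdegs E2) /\ perm_eq (Krdegs E1) (Kldegs E2)).
Proof.
move=> /forallP conn /existsP [p /forallP adj_p].
have p_adj u v : Kadj E1 u v = Kadj E2 (p u) (p v).
  by apply/eqP; move/forallP: (adj_p u); apply.
pose keeps := [pred u | is_left (p u) == is_left u].
have keeps_closed : closed (Kadj E1) keeps.
  move=> u v adj_uv; rewrite !inE (Kadj_is_left adj_uv).
  by rewrite p_adj in adj_uv; rewrite (Kadj_is_left adj_uv); case: is_left; case: is_left.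
have keeps_const u : keeps u = keeps (inl ord0).
  by apply: (closed_connect keeps_closed); move/forallP: (conn u); apply.
have [left_fixed | left_moved] := boolP (keeps (inl ord0)); [left | right].
all: split; apply: (Kdegs_perm p_adj); try exact: inl_inj; try exact: inr_inj.
all: move=> i; move: (keeps_const (inl i)) (keeps_const (inr i)).
all: rewrite ?left_fixed ?(negbTE left_moved) !inE /=.
all: by case: (p (inl i)); case: (p (inr i)).
Qed.

Section ParentTree.
Variables (n : nat) (P Q : nat -> nat).
Hypothesis P_le : forall j, j < n.+1 -> P j <= j.
Hypothesis Q_lt : forall i, 0 < i < n.+1 -> Q i < i.

(* Right vertex j hangs below left vertex P j, and left vertex i > 0 below right vertex Q i. *)
Definition parent_tree : Kedges n.+1 :=
  [set ij : 'I_n.+1 * 'I_n.+1 | (P ij.2 == ij.1) || (0 < ij.1) && (Q ij.1 == ij.2)].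

(* Every vertex but [inl ord0] ranks above its parent: 2 P j < 2 P j + 1 and 2 P (Q i) + 1 < 2 i. *)
Let rank (u : Kvert n.+1) : nat :=
  match u with inl i => (val i).*2 | inr j => (P j).*2.+1 end.
Let parent (u : Kvert n.+1) : Kvert n.+1 :=
  match u with inl i => inr (inord (Q i)) | inr j => inl (inord (P j)) end.

Lemma P_Q_lt i : 0 < i < n.+1 -> P (Q i) < i.
Proof.
move=> i_range; have lt_Qi := Q_lt i_range; case/andP: i_range => _ lt_in.
exact: leq_ltn_trans (P_le (ltn_trans lt_Qi lt_in)) lt_Qi.
Qed.

Lemma parent_tree_rank_neq u v : Kadj parent_tree u v -> rank u != rank v.
Proof.
by case: u => x; case: v => y //= _; apply/negP => /eqP/(congr1 odd); rewrite /= !odd_double.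
Qed.

Lemma parent_tree_lower u v : Kadj parent_tree u v -> rank v < rank u -> v = parent u.
Proof.
case: u => x; case: v => y //=; rewrite inE /=.
  case/orP => [/eqP <-|/andP [_ /eqP Qx]]; first by rewrite ltnNge leqnSn.
  by rewrite Qx inord_val.
case/orP => [/eqP Py _|/andP [y_gt0 /eqP Qy]]; first by rewrite Py inord_val.
by rewrite ltnS leq_double leqNgt -Qy P_Q_lt ?y_gt0 ?ltn_ord.
Qed.

Lemma parent_tree_parent u :
  u != inl ord0 -> Kadj parent_tree u (parent u) && (rank (parent u) < rank u).
Proof.
case: u => x /= x_ne0.
  have x_gt0 : 0 < x.
    by rewrite lt0n; apply: contraNneq x_ne0 => x0; apply/eqP; congr inl; exact: val_inj.
  have x_range : 0 < x < n.+1 by rewrite x_gt0 /=.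
  have lt_Qx := ltn_trans (Q_lt x_range) (ltn_ord x).
  by rewrite inE /= inordK // x_gt0 eqxx orbT /= ltn_Sdouble P_Q_lt.
have lt_Px : P x < n.+1 by apply: leq_ltn_trans (P_le (ltn_ord x)) _.
by rewrite inE /= inordK // eqxx /= ltnSn.
Qed.

Lemma parent_tree_spanning : Kspanning_tree parent_tree.
Proof.
apply/andP; split.
  apply/forallP => u; apply/forallP => v.
  exact: (connect_parent (Kadj_sym parent_tree) parent_tree_parent).
apply/existsP => -[k /existsP [t /and3P [k_gt2 uniq_t]]]; apply/negP.
apply: (parent_cycle_free (Kadj_sym _) parent_tree_rank_neq parent_tree_lower) => //.
by rewrite size_tuple.
Qed.

Lemma parent_tree_deg_inl (i : 'I_n.+1) :
  Kdeg parent_tree (inl i) = #|[set j : 'I_n.+1 | P j == i]| + (0 < i).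
Proof.
rewrite Kdeg_inl.
have -> : [set j | (i, j) \in parent_tree] =
    [set j : 'I_n.+1 | P j == i] :|: [set j : 'I_n.+1 | (0 < i) && (Q i == j)].
  by apply/setP => j; rewrite !inE.
rewrite cardsU (_ : _ :&: _ = set0) ?cards0 ?subn0; last first.
  apply/setP => j; rewrite !inE; apply/negbTE/negP => /and3P [/eqP Pj i_gt0 /eqP Qi].
  by have := @P_Q_lt i; rewrite i_gt0 ltn_ord Qi Pj ltnn => /(_ isT).
congr (_ + _); have [-> | i_gt0] := posnP i; first by apply/eqP; rewrite cards_eq0.
have i_range : 0 < i < n.+1 by rewrite i_gt0 /=.
have lt_Qi := ltn_trans (Q_lt i_range) (ltn_ord i).
rewrite (_ : [set j : 'I_n.+1 | _] = [set inord (Q i)]) ?cards1 //.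
by apply/setP => j; rewrite !inE -(inj_eq val_inj) /= inordK // eq_sym.
Qed.

Lemma parent_tree_deg_inr (j : 'I_n.+1) :
  Kdeg parent_tree (inr j) = #|[set i : 'I_n.+1 | (0 < i) && (Q i == j)]|.+1.
Proof.
have lt_Pj : P j < n.+1 by apply: leq_ltn_trans (P_le (ltn_ord j)) _.
rewrite Kdeg_inr.
have -> : [set i | (i, j) \in parent_tree] =
    [set inord (P j)] :|: [set i : 'I_n.+1 | (0 < i) && (Q i == j)].
  by apply/setP => i; rewrite !inE -(inj_eq val_inj) /= inordK // eq_sym.
rewrite cardsU (_ : _ :&: _ = set0) ?cards0 ?subn0 ?cards1 //.
apply/setP => i; rewrite !inE; apply/negbTE/negP => /and3P [/eqP -> i_gt0 /eqP Qi].
rewrite inordK // in i_gt0 Qi; have := @P_Q_lt (P j).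
by rewrite Qi ltnn i_gt0 lt_Pj => /(_ isT).
Qed.

End ParentTree.

Lemma card_ord_count m (f : pred nat) : #|[set j : 'I_m | f j]| = count f (iota 0 m).
Proof.
by rewrite cardsE cardE /enum_mem size_filter -enumT -val_enum_ord count_map.
Qed.

Lemma count_nth_iota (w : seq nat) (f : pred nat) :
  count (fun j => f (nth 0 w j)) (iota 0 (size w)) = count f w.
Proof. by rewrite -[in RHS](take_size w) -(map_nth_iota0 0) // count_map. Qed.

Lemma sumn_predn_size (s : seq nat) : all (leq 1) s -> sumn (map predn s) + size s = sumn s.
Proof. by elim: s => //= v s IHs /andP [v_gt0 /IHs <-]; rewrite addnS -addnA -addSn prednK. Qed.

Fixpoint expand_counts (c : nat) (x : seq nat) : seq nat :=
  if x is m :: x' then nseq m c ++ expand_counts c.+1 x' else [::].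

Lemma size_expand_counts c x : size (expand_counts c x) = sumn x.
Proof. by elim: x c => //= m x IHx c; rewrite size_cat size_nseq IHx. Qed.

Lemma expand_counts_range c x : all (fun v => c <= v < c + size x) (expand_counts c x).
Proof.
elim: x c => //= m x IHx c; rewrite all_cat; apply/andP; split.
  by apply/allP => v /nseqP [-> _]; rewrite leqnn addnS ltnS leq_addr.
by apply: sub_all (IHx c.+1) => v /andP [/ltnW -> /=]; rewrite addSnnS.
Qed.

Lemma count_expand_counts c x i : count (pred1 (c + i)) (expand_counts c x) = nth 0 x i.
Proof.
elim: x c i => [|m x IHx] c [|i] //=; rewrite count_cat count_nseq /=.
  rewrite addn0 eqxx mul1n (eq_in_count (a2 := pred0)) ?count_pred0 ?addn0 //.
  by move=> v /(allP (expand_counts_range c.+1 x)) /andP [lt_cv _]; exact: gtn_eqF.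
have /ltn_eqF -> : c < c + i.+1 by rewrite addnS ltnS leq_addr.
by rewrite mul0n -addSnnS IHx.
Qed.

Lemma nth_expand_counts_prefix c x j : j < size (expand_counts c x) ->
  c <= nth 0 (expand_counts c x) j /\ sumn (take (nth 0 (expand_counts c x) j - c) x) <= j.
Proof.
elim: x c j => [|m x IHx] c j //=; rewrite size_cat size_nseq nth_cat size_nseq => lt_j.
have [lt_jm | le_mj] := ltnP j m; first by rewrite nth_nseq lt_jm subnn take0.
have lt_jm : j - m < size (expand_counts c.+1 x) by rewrite ltn_subLR.
have [le_c lt_pre] := IHx c.+1 (j - m) lt_jm.
split; first exact: ltnW.
rewrite -[_ - c](@prednK) ?subn_gt0 // -subnS /= -(subnKC le_mj) leq_add2l.
by rewrite addKn.
Qed.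

(* An entry v at position j is preceded by all x_k copies of each k < v,
   and sortedness makes x_k >= x_v >= 1. *)
Lemma nth_expand_counts_le x j : sorted geq x -> j < sumn x -> nth 0 (expand_counts 0 x) j <= j.
Proof.
move=> x_sorted lt_j; set v := nth 0 _ j.
have j_in : j < size (expand_counts 0 x) by rewrite size_expand_counts.
have [_ pre_v] := nth_expand_counts_prefix j_in; rewrite subn0 -/v in pre_v.
have v_in : v \in expand_counts 0 x by apply: mem_nth.
have lt_v : v < size x by have /andP [] := allP (expand_counts_range 0 x) v v_in.
have xv_gt0 : 0 < nth 0 x v.
  by rewrite -(count_expand_counts 0) -has_count; apply/hasP; exists v => /=.
have pos_take : all (leq 1) (take v x).
  apply/(all_nthP 0) => k; rewrite size_take lt_v => lt_kv; rewrite nth_take //.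
  apply: leq_trans xv_gt0 _; apply: (sorted_leq_nth (leT := geq)) => //; last exact: ltnW.
  - by move=> p q r /= le_qp le_rq; apply: leq_trans le_rq le_qp.
  - exact: leqnn.
  - exact: ltn_trans lt_kv lt_v.
apply: leq_trans pre_v; rewrite -sumn_predn_size // size_take lt_v; exact: leq_addl.
Qed.

(* As [P] in [parent_tree], [parent_seq x] gives left vertex k exactly x_k children j > 0
   (plus the child 0 when k = 0), hence degree x_k + 1. *)
Definition parent_seq (x : seq nat) : nat -> nat := nth 0 (0 :: expand_counts 0 x).

Lemma parent_seq_le n x : sorted geq x -> sumn x = n ->
  forall j, j < n.+1 -> parent_seq x j <= j.
Proof.
move=> x_sorted sum_x [//|j] lt_j.
by apply/ltnW/(nth_expand_counts_le x_sorted); rewrite sum_x.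
Qed.

Lemma parent_seq_lt n x : sorted geq x -> sumn x = n ->
  forall i, 0 < i < n.+1 -> parent_seq x i < i.
Proof.
move=> x_sorted sum_x [//|i] /= lt_i.
by rewrite ltnS (nth_expand_counts_le x_sorted) // sum_x.
Qed.

Lemma map_nth_enum_ord n (x : seq nat) (f : nat -> nat) : size x = n ->
  [seq f (nth 0 x i) | i : 'I_n <- enum 'I_n] = map f x.
Proof.
move=> size_x; rewrite (map_comp (f \o nth 0 x) val) val_enum_ord map_comp -size_x.
by rewrite map_nth_iota0 ?take_size.
Qed.

Section DegreeTree.
Variables (n : nat) (x y : seq nat).
Hypotheses (x_sorted : sorted geq x) (size_x : size x = n.+1) (sum_x : sumn x = n).
Hypotheses (y_sorted : sorted geq y) (size_y : size y = n.+1) (sum_y : sumn y = n).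

Definition degree_tree := parent_tree n (parent_seq x) (parent_seq y).

Let P_le := parent_seq_le x_sorted sum_x.
Let Q_lt := parent_seq_lt y_sorted sum_y.

Lemma degree_tree_spanning : Kspanning_tree degree_tree.
Proof. exact: parent_tree_spanning P_le Q_lt. Qed.

Lemma Kdeg_degree_tree_inl (i : 'I_n.+1) : Kdeg degree_tree (inl i) = (nth 0 x i).+1.
Proof.
rewrite (parent_tree_deg_inl P_le Q_lt) (card_ord_count _ (fun j => parent_seq x j == i)).
have -> : iota 0 n.+1 = iota 0 (size (0 :: expand_counts 0 x)).
  by rewrite /= size_expand_counts sum_x.
rewrite (count_nth_iota _ (pred1 (i : nat))) /= -[X in pred1 X](add0n i) count_expand_counts.
by case: (posnP i) => [-> | i_gt0]; rewrite ?addn0 ?addn1 // eq_sym gtn_eqF.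
Qed.

Lemma Kdeg_degree_tree_inr (j : 'I_n.+1) : Kdeg degree_tree (inr j) = (nth 0 y j).+1.
Proof.
rewrite (parent_tree_deg_inr P_le Q_lt).
rewrite (card_ord_count _ (fun i => (0 < i) && (parent_seq y i == j))) /= (iotaDl 1 0 n) count_map.
have -> : iota 0 n = iota 0 (size (expand_counts 0 y)) by rewrite size_expand_counts sum_y.
by rewrite (count_nth_iota _ (pred1 (j : nat))) -(add0n j) count_expand_counts.
Qed.

Lemma Kldegs_degree_tree : Kldegs degree_tree = map S x.
Proof. by rewrite /Kldegs (eq_map Kdeg_degree_tree_inl) map_nth_enum_ord. Qed.

Lemma Krdegs_degree_tree : Krdegs degree_tree = map S y.
Proof. by rewrite /Krdegs (eq_map Kdeg_degree_tree_inr) map_nth_enum_ord. Qed.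

End DegreeTree.

Definition Ppart_set k m := [set t : k.-tuple 'I_m.+1 |
  let s := [seq val x | x <- t] in [&& sorted leq s, all (fun x => 0 < x) s & sumn s == m]].

Section PartitionTrees.
Variable n : nat.
Local Notation parts := (Ppart_set n.+1 (2 * n.+1 - 1)).
Implicit Types t u : n.+1.-tuple 'I_(2 * n.+1 - 1).+1.

Definition part_shift t := map predn (rev (map val t)).

Lemma part_shiftP t : t \in parts ->
  [/\ sorted geq (part_shift t), size (part_shift t) = n.+1, sumn (part_shift t) = n
    & map S (part_shift t) = rev (map val t)].
Proof.
rewrite inE => /and3P [t_sorted t_pos /eqP t_sum].
have S_shift : map S (part_shift t) = rev (map val t).
  rewrite -map_comp map_id_in // => v; rewrite mem_rev => /(allP t_pos) /= v_gt0.
  exact: prednK.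
split=> //.
- rewrite sorted_map rev_sorted; apply: sub_sorted t_sorted => p q le_pq.
  by rewrite /= -!subn1 leq_sub2r.
- by rewrite size_map size_rev size_map size_tuple.
have := sumn_predn_size (s := rev (map val t)); rewrite all_rev sumn_rev t_sum => /(_ t_pos).
rewrite size_rev size_map size_tuple => shift_sum; apply/eqP.
by rewrite -(eqn_add2r n.+1) shift_sum mul2n -addnn addSn subn1.
Qed.

Definition partition_tree t u := degree_tree n (part_shift t) (part_shift u).

Lemma partition_tree_spanning t u : t \in parts -> u \in parts ->
  Kspanning_tree (partition_tree t u).
Proof. by move=> /part_shiftP [? ? ? _] /part_shiftP [? ? ? _]; apply: degree_tree_spanning. Qed.

Lemma Kdegs_partition_tree t u : t \in parts -> u \in parts ->
  perm_eq (Kldegs (partition_tree t u)) (map val t) /\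
  perm_eq (Krdegs (partition_tree t u)) (map val u).
Proof.
move=> /part_shiftP [? ? ? St] /part_shiftP [? ? ? Su].
by rewrite Kldegs_degree_tree // Krdegs_degree_tree // St Su !perm_rev.
Qed.

Lemma parts_perm_inj t t' : t \in parts -> t' \in parts ->
  perm_eq (map val t) (map val t') -> t = t'.
Proof.
rewrite !inE => /and3P [t_sorted _ _] /and3P [t'_sorted _ _] perm_tt'.
have := sorted_eq leq_trans anti_leq t_sorted t'_sorted perm_tt'.
by move/(inj_map val_inj)/val_inj.
Qed.

Lemma Kiso_partition_tree t u t' u' :
  t \in parts -> u \in parts -> t' \in parts -> u' \in parts ->
  Kiso (partition_tree t u) (partition_tree t' u') ->
  (t = t' /\ u = u') \/ (t = u' /\ u = t').
Proof.
move=> tP uP t'P u'P iso.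
have [conn _] := andP (partition_tree_spanning tP uP).
have [degL degR] := Kdegs_partition_tree tP uP.
have [degL' degR'] := Kdegs_partition_tree t'P u'P.
have [[keepL keepR] | [swapL swapR]] := Kiso_degs conn iso; [left | right].
all: split; apply: parts_perm_inj => //.
- by rewrite -(permPl degL) (permPl keepL).
- by rewrite -(permPl degR) (permPl keepR).
- by rewrite -(permPl degL) (permPl swapL).
- by rewrite -(permPl degR) (permPl swapR).
Qed.

End PartitionTrees.

(* The pairs i <= j and i >= j cover 'I_r x 'I_r and overlap in the diagonal. *)
Lemma card_le_pairs r : #|[set ij : 'I_r * 'I_r | ij.1 <= ij.2]| = r * (r + 1) %/ 2.
Proof.
set A := [set ij : 'I_r * 'I_r | ij.1 <= ij.2].
have AUAt : A :|: [set (ij.2, ij.1) | ij in A] = setT.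
  apply/setP => -[i j]; rewrite !inE; case: (leqP i j) => //= lt_ji.
  by apply/imsetP; exists (j, i); rewrite // inE /= ltnW.
have AIAt : A :&: [set (ij.2, ij.1) | ij in A] = [set (i, i) | i : 'I_r].
  apply/setP => -[i j]; rewrite !inE /=; apply/andP/imsetP => [[le_ij] | [k _ [-> ->]]].
    case/imsetP => -[k l]; rewrite inE /= => le_kl [eq_i eq_j]; subst i j.
    by exists l => //; congr pair; apply/val_inj/eqP; rewrite eqn_leq le_ij le_kl.
  by split=> //; apply/imsetP; exists (k, k); rewrite ?inE.
have := cardsUI A [set (ij.2, ij.1) | ij in A].
rewrite AUAt AIAt cardsT !card_imset => [| i j [] // | [i j] [k l] [-> ->] //].
by rewrite card_prod card_ord addnn -muln2 mulnDr muln1 => ->; rewrite mulnK.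
Qed.

Unset Implicit Arguments.

Theorem theorem2p4 (a : nat) :
  2 <= a ->
  let r := Ppart a (2 * a - 1) in
  r * (r + 1) %/ 2 <= Iaa a.
Proof.
case: a => [//|n] _ /=; set r := Ppart n.+1 _; rewrite -card_le_pairs.
set trees := [set E : Kedges n.+1 | Kspanning_tree E].
pose part (i : 'I_r) := enum_val (i : 'I_#|Ppart_set n.+1 (2 * n.+1 - 1)|).
have partP i : part i \in Ppart_set n.+1 (2 * n.+1 - 1) := enum_valP i.
pose class (ij : 'I_r * 'I_r) :=
  [set E in trees | Kiso (partition_tree (part ij.1) (part ij.2)) E].
have class_inj : {in [set ij : 'I_r * 'I_r | ij.1 <= ij.2] &, injective class}.
  move=> [i j] [k l]; rewrite !inE /= => le_ij le_kl eq_class.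
  have : partition_tree (part k) (part l) \in class (i, j).
    by rewrite eq_class !inE partition_tree_spanning ?Kiso_refl.
  rewrite inE /= => /andP [_ /(Kiso_partition_tree (partP i) (partP j) (partP k) (partP l))].
  case=> -[/enum_val_inj eq_ik /enum_val_inj eq_jl]; first by rewrite eq_ik eq_jl.
  have eq_kl : k = l by apply/val_inj/eqP; rewrite eqn_leq le_kl -eq_ik -eq_jl le_ij.
  by rewrite eq_ik eq_jl eq_kl.
rewrite -(card_in_imset class_inj); apply/subset_leq_card/subsetP => _ /imsetP [ij _ ->].
apply/imsetP; exists (partition_tree (part ij.1) (part ij.2)) => //.
by rewrite inE partition_tree_spanning.
Qed.
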